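(* Let $b:\omega\to(\omega+1)\smallsetminus\{0\}$ and $h\in\omega^\omega$ satisfy $\lim_{i\to\infty}h(i)/b(i)=0$ (reading $h(i)/b(i)$ as $0$ when $b(i)=\omega$), and let $D$ be a non-principal ultrafilter on $\omega$. If $G$ is $\mathbb{E}^h_b$-generic over $V$, then in $V[G]$ there is an ultrafilter $D^*$ on $\mathcal{P}(\omega)\cap V[G]$ extending $D$ such that for every $(s,m)\in\mathrm{seq}_{<\omega}(b)\times\omega$ and every sequence $\bar p=\langle p_n:n<\omega\rangle\in V$ of members of $\mathbb{E}^h_b(s,m)$ whose $D$-limit belongs to $G$, the set $\{n<\omega:p_n\in G\}$ belongs to $D^*$. In particular, $\mathbb{E}^h_b$ is $\sigma$-uf-linked.
   Context: $\mathrm{seq}_{<\omega}(b)=\bigcup_{n<\omega}\prod_{i<n}b(i)$; for $g\in\omega^\omega$, $\mathcal{S}(b,g)=\prod_{i<\omega}[b(i)]^{\le g(i)}$. The poset $\mathbb{E}^h_b$ consists of pairs $p=(s,\varphi)$ for which there is $m<\omega$ with $s\in\mathrm{seq}_{<\omega}(b)$, $\varphi\in\mathcal{S}(b,m\cdot h)$ and $m\cdot h(i)<b(i)$ for all $i\ge|s|$; let $m_p$ be the least such $m$. The order: $(t,\psi)\le(s,\varphi)$ iff $s\subseteq t$, $\varphi(i)\subseteq\psi(i)$ for all $i$, and $t(i)\notin\varphi(i)$ for all $i\in|t|\smallsetminus|s|$. $\mathbb{E}^h_b(s,m)=\{(t,\varphi)\in\mathbb{E}^h_b:t=s,\ m_{(t,\varphi)}\le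 m\}$. If $p_n=(s,\varphi_n)\in\mathbb{E}^h_b(s,m)$ for all $n$, the $D$-limit of $\langle p_n\rangle$ is $(s,\varphi)$ where $k\in\varphi(i)$ iff $\{n:k\in\varphi_n(i)\}\in D$. A subset $Q$ of a poset $\mathbb{P}$ is uf-linked if for every non-principal ultrafilter $D'$ on $\omega$ and every sequence $\langle p_n\rangle$ in $Q$ some $q\in\mathbb{P}$ forces $\{n:p_n\in\dot G\}$ to meet every member of $D'$; $\mathbb{P}$ is $\sigma$-uf-linked if it is a countable union of uf-linked sets. *)

From mathcomp Require Import all_boot.
Unset Printing Implicit Defensive.

(* b : omega -> (omega+1)\{0} is encoded as nat -> option nat, None = omega. *)
Definition below (x : option nat) (k : nat) : Prop :=
  match x with None => True | Some n => k < n end.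

(* lim_{i->oo} h(i)/b(i) = 0, with h(i)/b(i) read as 0 when b(i) = omega:
   for every k >= 1, eventually h(i)/b(i) < 1/k, i.e. k*h(i) < b(i). *)
Definition ratio_to_zero (h : nat -> nat) (b : nat -> option nat) : Prop :=
  forall k, 0 < k -> exists N, forall i, N <= i -> below (b i) (k * h i).

Definition nset := nat -> Prop.

Definition is_ultrafilter (D : nset -> Prop) : Prop :=
  [/\ ~ D (fun _ => False),
      D (fun _ => True),
      (forall A B : nset, D A -> (forall n, A n -> B n) -> D B),
      (forall A B : nset, D A -> D B -> D (fun n => A n /\ B n)) &
      (forall A : nset, D A \/ D (fun n => ~ A n))].

Definition non_principal (D : nset -> Prop) : Prop :=
  forall m, ~ D (fun n => n = m).

Definition in_seqb (b : nat -> option nat) (s : seq nat) : Prop :=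
  forall i, i < size s -> below (b i) (nth 0 s i).

Definition in_Sbg (b : nat -> option nat) (g : nat -> nat) (phi : nat -> nset) : Prop :=
  forall i, (forall k, phi i k -> below (b i) k) /\
            exists l : seq nat, size l <= g i /\ forall k, phi i k -> k \in l.

Definition cond := (seq nat * (nat -> nset))%type.

Definition cond_wit (b : nat -> option nat) (h : nat -> nat) (p : cond) (m : nat) : Prop :=
  [/\ in_seqb b p.1, in_Sbg b (fun i => m * h i) p.2 &
      forall i, size p.1 <= i -> below (b i) (m * h i)].

Definition isCond (b : nat -> option nat) (h : nat -> nat) (p : cond) : Prop := exists m, cond_wit b h p m.

Definition leE (q p : cond) : Prop :=
  [/\ prefix p.1 q.1,
      (forall i k, p.2 i k -> q.2 i k) &
      forall i, size p.1 <= i < size q.1 -> ~ p.2 i (nth 0 q.1 i)].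

(* E^h_b(s,m): first coordinate s and m_p <= m (m_p the least witness) *)
Definition inEsm (b : nat -> option nat) (h : nat -> nat) (s : seq nat) (m : nat) (p : cond) : Prop :=
  p.1 = s /\ exists m', m' <= m /\ cond_wit b h p m'.

Definition Dlim (D : nset -> Prop) (s : seq nat) (p : nat -> cond) : cond :=
  (s, fun i k => D (fun n => (p n).2 i k)).

(* Forcing over the ground model, unfolded combinatorially. *)
Definition compatE (b : nat -> option nat) (h : nat -> nat) (p q : cond) : Prop :=
  exists r, isCond b h r /\ leE r p /\ leE r q.

(* q forces "x is in the generic": every extension of q is compatible with x *)
Definition forces_inG (b : nat -> option nat) (h : nat -> nat) (q x : cond) : Prop :=
  forall r, isCond b h r -> leE r q -> compatE b h r x.

(* q forces "exists n in A with p^j_n in G for all j in the list":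
   the set of such witnesses is dense below q. *)
Definition forces_meet (b : nat -> option nat) (h : nat -> nat) (q : cond) (A : nset) (ps : seq (nat -> cond)) : Prop :=
  forall r, isCond b h r -> leE r q ->
    exists r', [/\ isCond b h r', leE r' r &
      exists n, A n /\ forall j, j < size ps -> leE r' (nth (fun _ => r') ps j n)].

Definition uf_linked (b : nat -> option nat) (h : nat -> nat) (Q : cond -> Prop) : Prop :=
  forall D' : nset -> Prop, is_ultrafilter D' -> non_principal D' ->
  forall p : nat -> cond, (forall n, Q (p n)) ->
  exists q, isCond b h q /\ forall A, D' A -> forces_meet b h q A [:: p].

Definition sigma_uf_linked (b : nat -> option nat) (h : nat -> nat) : Prop :=
  exists Q : nat -> cond -> Prop,
    (forall p, isCond b h p <-> exists k, Q k p) /\ forall k, uf_linked b h (Q k).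

From mathcomp Require Import all_boot zify.
From Stdlib Require Import Classical.

(* Let r extend q.  Since each D-limit is forced into the generic, r has a
   common extension (t, psi) below all of them, and, because h(i)/b(i) -> 0, t
   can be lengthened until b(i) > (m_r + sum_j m_j) h(i) beyond it.  As (t, psi)
   extends the D-limit of the j-th sequence, each new digit of t avoids the
   limit sets, hence avoids the sets of p^j_n for D-many n; pick such an n in A.
   The amalgam of (t, psi) with all the p^j_n (union of the side sets) is then a
   condition extending r and every p^j_n.  For sigma-uf-linkedness, the D-limit
   of a sequence in E(s,m) is again a condition (a D-limit of sets of size
   <= M has size <= M), so each of the countably many pieces E(s,m) is
   uf-linked. *)

Section Ultrafilter.

Context {D : nset -> Prop} (HD : is_ultrafilter D).

Lemma uf_setT : D (fun _ => True).
Proof. by case: HD. Qed.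

Lemma uf_mono {A B : nset} : D A -> (forall n, A n -> B n) -> D B.
Proof. by case: HD => _ _ mono _ _; apply: mono. Qed.

Lemma uf_setI {A B : nset} : D A -> D B -> D (fun n => A n /\ B n).
Proof. by case: HD => _ _ _ capD _; apply: capD. Qed.

Lemma uf_setC {A : nset} : ~ D A -> D (fun n => ~ A n).
Proof. by case: HD => _ _ _ _ /(_ A) []. Qed.

Lemma uf_nonempty {A : nset} : D A -> exists n, A n.
Proof.
move=> DA; apply: NNPP => noA; case: HD => D0 _ _ _ _; apply: D0.
by apply: (uf_mono DA) => n An; apply: noA; exists n.
Qed.

Lemma uf_forall_lt (P : nat -> nset) K : (forall k, k < K -> D (P k)) ->
  D (fun n => forall k, k < K -> P k n).
Proof.
elim: K => [|K IH] DP; first by apply: (uf_mono uf_setT) => n _ k.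
have DK := uf_setI (IH (fun k lt_kK => DP k (ltnW lt_kK))) (DP K (ltnSn K)).
apply: (uf_mono DK) => n [Pn PKn] k; rewrite ltnS leq_eqVlt => /predU1P[-> //|].
exact: Pn.
Qed.

Lemma uf_pigeonhole m (P : nat -> nset) :
  (forall n, exists2 c, c <= m & P c n) -> exists2 c, c <= m & D (P c).
Proof.
move=> colour; apply: NNPP => none.
have Dnone := uf_forall_lt (fun c n => ~ P c n) m.+1
  (fun c le_cm => uf_setC (fun DPc => none (ex_intro2 _ _ c le_cm DPc))).
have [n notP] := uf_nonempty Dnone; have [c le_cm Pcn] := colour n.
exact: notP c le_cm Pcn.
Qed.

Lemma uf_limit_size M (X : nset) (F : nat -> nset) : D X ->
  (forall n, X n -> exists l : seq nat, size l <= M /\ forall k, F n k -> k \in l) ->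
  exists l : seq nat, size l <= M /\ forall k, D (fun n => F n k) -> k \in l.
Proof.
elim: M F => [|M IH] F DX smallF.
  exists [::]; split=> // k DFk; have [n [Xn Fnk]] := uf_nonempty (uf_setI DX DFk).
  by have [[|? ?] [// _ /(_ k Fnk)]] := smallF n Xn.
have [[k0 DFk0]|noLim] := classic (exists k0, D (fun n => F n k0)); last first.
  by exists [::]; split=> // k DFk; case: noLim; exists k.
pose F' n k := [/\ F n k0, F n k & k <> k0].
have smallF' n : X n -> exists l : seq nat, size l <= M /\ forall k, F' n k -> k \in l.
  move=> Xn; have [l [size_l Fl]] := smallF n Xn.
  have [Fnk0|] := classic (F n k0); last by exists [::]; split=> // k [].
  exists (rem k0 l); split; first by rewrite size_rem ?Fl // -subn1 leq_subLR add1n.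
  by move=> k [_ Fnk /eqP neq_kk0]; apply: rem_mem => //; apply: Fl.
have [l [size_l F'l]] := IH F' DX smallF'.
exists (k0 :: l); split=> // k DFk; rewrite inE; apply/predU1P.
have [-> | neq_kk0] := eqVneq k k0; [by left | right].
apply: F'l; apply: (uf_mono (uf_setI DFk0 DFk)) => n [? ?].
by split=> //; apply/eqP.
Qed.

End Ultrafilter.

Lemma leE_refl (p : cond) : leE p p.
Proof. by split=> // [|i]; [exact: prefix_refl | lia]. Qed.

Lemma prefix_nth {s t : seq nat} {i} : prefix s t -> i < size s -> nth 0 t i = nth 0 s i.
Proof. by move=> /prefixP[u ->] lt_is; rewrite nth_cat lt_is. Qed.

Lemma leE_trans {p q r : cond} : leE r q -> leE q p -> leE r p.
Proof.
case=> qr psi_qr avoid_qr [pq psi_pq avoid_pq]; split.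
- exact: prefix_trans pq qr.
- by move=> i k /psi_pq /psi_qr.
- move=> i /andP[le_pi lt_ir]; have [lt_iq|le_qi] := ltnP i (size q.1).
    by rewrite (prefix_nth qr lt_iq); apply: avoid_pq; rewrite le_pi.
  by move=> /psi_pq; apply: avoid_qr; rewrite le_qi.
Qed.

Lemma below_mono x k k' : k' <= k -> below x k -> below x k'.
Proof. by case: x => //= n; lia. Qed.

Lemma exists_notin_le_size (l : seq nat) : exists2 x, x <= size l & x \notin l.
Proof.
apply: NNPP => all_in.
have sub : {subset iota 0 (size l).+1 <= l}.
  move=> x; rewrite mem_iota ltnS => /andP[_ le_xl]; apply: NNPP => /negP x_l.
  by apply: all_in; exists x.
by have := uniq_leq_size (iota_uniq 0 (size l).+1) sub; rewrite size_iota ltnn.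
Qed.

Lemma cover_big_union K (F : nat -> nset) (g : nat -> nat) :
  (forall j, j < K -> exists l : seq nat, size l <= g j /\ forall k, F j k -> k \in l) ->
  exists L : seq nat, size L <= \sum_(j < K) g j /\
    forall k, (exists2 j, j < K & F j k) -> k \in L.
Proof.
elim: K => [|K IH] smallF.
  by exists [::]; split=> // k [].
have [L [size_L FL]] := IH (fun j lt_jK => smallF j (ltnW lt_jK)).
have [l [size_l Fl]] := smallF K (ltnSn K).
exists (L ++ l); split; first by rewrite big_ord_recr size_cat leq_add.
move=> k [j]; rewrite mem_cat ltnS leq_eqVlt => /predU1P[-> /Fl -> | lt_jK Fjk].
  exact: orbT.
by rewrite FL //; exists j.
Qed.

Definition amalgam (r : cond) (K : nat) (qs : nat -> cond) : cond :=
  (r.1, fun i k => r.2 i k \/ exists2 j, j < K & (qs j).2 i k).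

Lemma leE_amalgam_l r K qs : leE (amalgam r K qs) r.
Proof. by split=> [|i k|i] /=; [exact: prefix_refl | left | lia]. Qed.

Lemma leE_amalgam r K qs j : j < K -> prefix (qs j).1 r.1 ->
    (forall i, size (qs j).1 <= i < size r.1 -> ~ (qs j).2 i (nth 0 r.1 i)) ->
  leE (amalgam r K qs) (qs j).
Proof. by move=> lt_jK pre avoid; split=> // i k psi_ik; right; exists j. Qed.

Section Conditions.

Context {b : nat -> option nat} {h : nat -> nat}.

Lemma cond_wit_rcons {t psi m} : cond_wit b h (t, psi) m ->
  exists x, cond_wit b h (rcons t x, psi) m /\ leE (rcons t x, psi) (t, psi).
Proof.
case=> /= stem_t Sbg_psi tail_t; have [_ [l [size_l psi_l]]] := Sbg_psi (size t).
have [x le_xl x_l] := exists_notin_le_size l.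
have lt_xb : below (b (size t)) x.
  exact: below_mono (leq_trans le_xl size_l) (tail_t _ (leqnn _)).
exists x; split; split=> //=.
- move=> i; rewrite size_rcons nth_rcons ltnS leq_eqVlt => /predU1P[-> | lt_it].
    by rewrite ltnn eqxx.
  by rewrite lt_it; apply: stem_t.
- by move=> i; rewrite size_rcons => /ltnW; apply: tail_t.
- exact: prefix_rcons.
- move=> i; rewrite size_rcons ltnS -eqn_leq => /eqP <-.
  by rewrite nth_rcons ltnn eqxx => /psi_l; apply/negP.
Qed.

Lemma cond_wit_extend_stem {t psi m} N : cond_wit b h (t, psi) m ->
  exists t', [/\ N <= size t', cond_wit b h (t', psi) m & leE (t', psi) (t, psi)].
Proof.
move=> wit; elim: N => [|N [t' [le_Nt' wit' le_t't]]].
  by exists t; split=> //; apply: leE_refl.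
have [x [wit_x le_xt']] := cond_wit_rcons wit'.
exists (rcons t' x); split=> //; first by rewrite size_rcons.
exact: leE_trans le_xt' le_t't.
Qed.

Lemma inEsm_Sbg s m p : inEsm b h s m p -> in_Sbg b (fun i => m * h i) p.2.
Proof.
case=> _ [m' [le_m'm [_ Sbg_p _]]] i; have [sub [l [size_l psi_l]]] := Sbg_p i.
by split=> //; exists l; split=> //; apply: leq_trans size_l (leq_mul le_m'm _).
Qed.

Lemma amalgam_wit {r mr K} {qs : nat -> cond} (ms : nat -> nat) :
    cond_wit b h r mr ->
    (forall j, j < K -> in_Sbg b (fun i => ms j * h i) (qs j).2) ->
    (forall i, size r.1 <= i -> below (b i) ((mr + \sum_(j < K) ms j) * h i)) ->
  cond_wit b h (amalgam r K qs) (mr + \sum_(j < K) ms j).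
Proof.
case=> stem_r Sbg_r _ Sbg_qs tail_r; split=> // i; split.
  by move=> k [/(Sbg_r i).1 | [j lt_jK /(Sbg_qs j lt_jK i).1]].
have [_ [l [size_l psi_l]]] := Sbg_r i.
have [L [size_L qs_L]] := cover_big_union K (fun j => (qs j).2 i)
  (fun j => ms j * h i) (fun j lt_jK => (Sbg_qs j lt_jK i).2).
exists (l ++ L); split; first by rewrite size_cat mulnDl big_distrl leq_add.
by move=> k [/psi_l | /qs_L]; rewrite mem_cat => ->; rewrite ?orbT.
Qed.

Lemma forced_common_extension {q r} (xs : nat -> cond) K :
    isCond b h r -> leE r q -> (forall j, j < K -> forces_inG b h q (xs j)) ->
  exists r', [/\ isCond b h r', leE r' r & forall j, j < K -> leE r' (xs j)].
Proof.
move=> cond_r le_rq; elim: K => [|K IH] forced.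
  by exists r; split=> //; apply: leE_refl.
have [r1 [cond_r1 le_r1r le_r1xs]] := IH (fun j lt_jK => forced j (ltnW lt_jK)).
have [r2 [cond_r2 [le_r2r1 le_r2xK]]] :=
  forced K (ltnSn K) r1 cond_r1 (leE_trans le_r1r le_rq).
exists r2; split=> //; first exact: leE_trans le_r2r1 le_r1r.
move=> j; rewrite ltnS leq_eqVlt => /predU1P[-> // | lt_jK].
exact: leE_trans le_r2r1 (le_r1xs j lt_jK).
Qed.

Section Limits.

Context {D : nset -> Prop} (HD : is_ultrafilter D).

Lemma isCond_Dlim s m (p : nat -> cond) :
  (forall n, inEsm b h s m (p n)) -> isCond b h (Dlim D s p).
Proof.
move=> inE; have wit_le_m n : exists2 c, c <= m & cond_wit b h (p n) c.
  by have [_ [c [le_cm wit]]] := inE n; exists c.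
have [c _ Dwit] := uf_pigeonhole HD m (fun c n => cond_wit b h (p n) c) wit_le_m.
have [n0 [stem0 Sbg0 tail0]] := uf_nonempty HD Dwit; have [stem_p0 _] := inE n0.
exists c; split=> /=; rewrite -?stem_p0 // => i; split.
  move=> k /(uf_nonempty HD) [n].
  by have [_ [m' [_ [_ /(_ i) [sub _] _]]]] := inE n; apply: sub.
by apply: (uf_limit_size HD _ _ (fun n => (p n).2 i) Dwit) => n [_ /(_ i) [_ small] _].
Qed.

Lemma Dlim_avoid {s} {p : nat -> cond} {r} : leE r (Dlim D s p) ->
  D (fun n => forall i, size s <= i < size r.1 -> ~ (p n).2 i (nth 0 r.1 i)).
Proof.
case=> _ _ /= avoid.
have Dsmall i : i < size r.1 -> D (fun n => size s <= i -> ~ (p n).2 i (nth 0 r.1 i)).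
  move=> lt_ir; have [le_si | lt_is] := leqP (size s) i.
    have range_i : size s <= i < size r.1 by rewrite le_si.
    by apply: (uf_mono HD (uf_setC HD (avoid i range_i))) => n notp _.
  by apply: (uf_mono HD (uf_setT HD)) => n _.
apply: (uf_mono HD (uf_forall_lt HD _ _ Dsmall)) => n avoid_n i /andP[le_si lt_ir].
exact: avoid_n.
Qed.

End Limits.

Lemma forces_meet_of_forced_Dlim {D : nset -> Prop} (HD : is_ultrafilter D) q A
    (data : seq (seq nat * nat * (nat -> cond))) :
    ratio_to_zero h b -> D A ->
    (forall j, j < size data -> let d := nth ([::], 0, fun _ => q) data j in
       (forall n, inEsm b h d.1.1 d.1.2 (d.2 n)) /\ forces_inG b h q (Dlim D d.1.1 d.2)) ->
  forces_meet b h q A [seq d.2 | d <- data].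
Proof.
move=> ratio DA hyp r cond_r le_rq.
pose d j := nth ([::], 0, fun _ => q) data j; pose K := size data.
have [[t psi] [[mr wit] le_r1r le_r1lim]] := forced_common_extension
  (fun j => Dlim D (d j).1.1 (d j).2) K cond_r le_rq (fun j lt_jK => (hyp j lt_jK).2).
pose M := mr + \sum_(j < K) (d j).1.2.
have [N large] := ratio M.+1 isT.
have [t' [le_Nt' wit' le_t't]] := cond_wit_extend_stem N wit.
have le_t'lim j : j < K -> leE (t', psi) (Dlim D (d j).1.1 (d j).2).
  by move=> lt_jK; apply: leE_trans le_t't (le_r1lim j lt_jK).
have [n [An avoid_n]] := uf_nonempty HD (uf_setI HD DA (uf_forall_lt HD _ K
  (fun j lt_jK => Dlim_avoid HD (le_t'lim j lt_jK)))).
exists (amalgam (t', psi) K (fun j => (d j).2 n)); split.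
- exists M; apply: (amalgam_wit (fun j => (d j).1.2) wit') => [j lt_jK | i le_t'i].
    exact: inEsm_Sbg ((hyp j lt_jK).1 n).
  apply: below_mono (large i (leq_trans le_Nt' le_t'i)).
  by rewrite mulSn leq_addl.
- exact: leE_trans (leE_trans (leE_amalgam_l _ _ _) le_t't) le_r1r.
- exists n; split=> // j; rewrite size_map => lt_jK.
  rewrite (nth_map ([::], 0, fun _ => q)) //.
  have [stem_p _] := (hyp j lt_jK).1 n; have [pre _ _] := le_t'lim j lt_jK.
  by apply: leE_amalgam => //=; rewrite stem_p //; apply: avoid_n.
Qed.

Lemma uf_linked_inEsm s m : ratio_to_zero h b -> uf_linked b h (inEsm b h s m).
Proof.
move=> ratio D' HD' _ p inE; exists (Dlim D' s p).
split=> [|A DA]; first exact: isCond_Dlim HD' _ _ _ inE.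
apply: forces_meet_of_forced_Dlim HD' _ A [:: (s, m, p)] ratio DA _.
move=> j; rewrite ltnS leqn0 => /eqP -> /=; split=> // r cond_r le_r.
by exists r; split=> //; split=> //; apply: leE_refl.
Qed.

Definition Esm_piece (k : nat) (p : cond) : Prop :=
  if unpickle k is Some (s, m) then inEsm b h s m p else False.

Lemma isCond_Esm_piece p : isCond b h p <-> exists k, Esm_piece k p.
Proof.
rewrite /Esm_piece; split=> [[m wit] | [k]].
  by exists (pickle (p.1, m)); rewrite pickleK; split=> //; exists m.
case: (unpickle k) => [[s m] [_ [m' [_ wit]]] |] //.
by exists m'.
Qed.

Lemma ratio_sigma_uf_linked : ratio_to_zero h b -> sigma_uf_linked b h.
Proof.
move=> ratio; exists Esm_piece; split=> [p | k]; first exact: isCond_Esm_piece.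
rewrite /Esm_piece; case: (unpickle k) => [[s m] |]; first exact: uf_linked_inEsm.
by move=> D' _ _ p /(_ 0).
Qed.

End Conditions.

Theorem lemma3p8 (b : nat -> option nat) (h : nat -> nat) (D : nset -> Prop) :
  (forall i, b i <> Some 0) ->
  ratio_to_zero h b ->
  is_ultrafilter D -> non_principal D ->
  (* "1 forces: D u {{n : p_n in G} : pbar as below} has the f.i.p." *)
  (forall (q : cond) (A : nset)
          (data : seq (seq nat * nat * (nat -> cond))),
     isCond b h q -> D A ->
     (forall j, j < size data -> let d := nth ([::], 0, fun _ => q) data j in
        (forall n, inEsm b h d.1.1 d.1.2 (d.2 n)) /\
        isCond b h (Dlim D d.1.1 d.2) /\
        forces_inG b h q (Dlim D d.1.1 d.2)) ->
     forces_meet b h q A [seq d.2 | d <- data]) /\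
  sigma_uf_linked b h.
Proof.
move=> _ ratio HD _; split; last exact: ratio_sigma_uf_linked.
move=> q A data _ DA hyp; apply: forces_meet_of_forced_Dlim HD _ _ _ ratio DA _.
by move=> j lt_jK; have [inE [_ forced]] := hyp j lt_jK.
Qed.
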